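(* Let $G$ and $H$ be Left dead-ends with $G\geq H$. Then the formal birthday of $G$ is at most the formal birthday of $H$.
   Context: Games are finite partizan games; $o(G)$ is the misère outcome class (ordered $\mathscr{L}>\mathscr{N}>\mathscr{R}$, $\mathscr{L}>\mathscr{P}>\mathscr{R}$). A universe is a set of games closed under options, disjunctive sums, conjugates, and forming $\{\mathscr{G}^L\mid\mathscr{G}^R\}$ from nonempty finite subsets of it; $G\geq_\mathcal{U}H$ means $o(G+X)\geq o(H+X)$ for all $X\in\mathcal{U}$. A Left dead-end is a game all of whose subpositions have no Left option. For Left dead-ends, $G\geq H$ means $G\geq_\mathcal{U}H$ for every universe $\mathcal{U}$. The formal birthday is the height of the game tree. *)

From Stdlib Require Import List Arith.
Import ListNotations.

Inductive game : Type :=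
  | Game : list game -> list game -> game.

Definition leftOpts (G : game) : list game := match G with Game gl _ => gl end.
Definition rightOpts (G : game) : list game := match G with Game _ gr => gr end.

Fixpoint add (G H : game) {struct G} : game :=
  match G with
  | Game gl gr =>
      let fix addH (H : game) : game :=
        match H with
        | Game hl hr =>
            Game (map (fun g => add g H) gl ++ map addH hl)
                 (map (fun g => add g H) gr ++ map addH hr)
        end in
      addH H
  end.

Fixpoint conj (G : game) : game :=
  match G with
  | Game gl gr => Game (map conj gr) (map conj gl)
  end.

(* Misere play: a player who cannot move wins.
   wins G = (Left wins moving first, Right wins moving first). *)
Fixpoint wins (G : game) : bool * bool :=
  match G with
  | Game gl gr =>
      ( match gl with
        | [] => true
        | _ => existsb (fun g => negb (snd (wins g))) gl
        end,
        match gr with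
        | [] => true
        | _ => existsb (fun g => negb (fst (wins g))) gr
        end )
  end.

Inductive outcome : Type := oL | oN | oP | oR.

Definition o (G : game) : outcome :=
  match wins G with
  | (true, false) => oL   (* Left wins moving first and moving second *)
  | (true, true) => oN
  | (false, false) => oP
  | (false, true) => oR
  end.

Definition outcome_le (a b : outcome) : Prop :=
  a = b \/ a = oR \/ b = oL.

Inductive subposition : game -> game -> Prop :=
  | subpos_refl G : subposition G G
  | subpos_left S G' G : In G' (leftOpts G) -> subposition S G' -> subposition S G
  | subpos_right S G' G : In G' (rightOpts G) -> subposition S G' -> subposition S G.

Definition left_dead_end (G : game) : Prop :=
  forall S, subposition S G -> leftOpts S = [].

Definition universe (U : game -> Prop) : Prop :=
  (forall G G', U G -> In G' (leftOpts G) -> U G') /\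
  (forall G G', U G -> In G' (rightOpts G) -> U G') /\
  (forall G H, U G -> U H -> U (add G H)) /\
  (forall G, U G -> U (conj G)) /\
  (forall A B : list game, A <> [] -> B <> [] ->
     Forall U A -> Forall U B -> U (Game A B)).

Definition ge_U (U : game -> Prop) (G H : game) : Prop :=
  forall X, U X -> outcome_le (o (add H X)) (o (add G X)).

Definition game_ge (G H : game) : Prop :=
  forall U, universe U -> ge_U U G H.

Fixpoint birthday (G : game) : nat :=
  match G with
  | Game gl gr =>
      Nat.max (list_max (map (fun g => S (birthday g)) gl))
              (list_max (map (fun g => S (birthday g)) gr))
  end.

From Stdlib Require Import List Arith Lia Bool Wf_nat.
Import ListNotations.

(* Test G against the ladder X_(k+1), where X_0 = 0 and X_(j+1) = {X_j | 0}.
   When G is a Left dead-end, Left's only moves in G + X_(k+1) climb down the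
   ladder, and Right gains nothing by moving in it (the move to 0 leaves Left
   without moves, i.e. winning).  So Left, moving first, loses G + X_(k+1)
   exactly when Right can make k consecutive moves in G and then be stuck.
   Taking k to be the birthday of G, Right can do this in G (follow a longest
   branch) but not in any Left dead-end H of smaller birthday; then Left wins
   H + X_(k+1) moving first but not G + X_(k+1), which contradicts G >= H. *)

Definition zero : game := Game [] [].

Fixpoint ladder (k : nat) : game :=
  match k with
  | 0 => zero
  | S k => Game [ladder k] [zero]
  end.

Fixpoint right_run (G : game) (k : nat) : Prop :=
  match k with
  | 0 => rightOpts G = []
  | S k => exists g, In g (rightOpts G) /\ right_run g k
  end.

Lemma list_max_In l : l <> [] -> In (list_max l) l.
Proof.
  induction l as [|a l IH]; intros Hne; [congruence|].
  destruct l as [|b l]; [left; simpl; lia|].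
  change (In (Nat.max a (list_max (b :: l))) (a :: b :: l)).
  destruct (Nat.max_spec a (list_max (b :: l))) as [[_ ->]|[_ ->]].
  - right; apply IH; discriminate.
  - left; reflexivity.
Qed.

Lemma list_max_ge l n : In n l -> n <= list_max l.
Proof.
  intros Hin.
  assert (Hall : Forall (fun k => k <= list_max l) l) by (apply list_max_le; lia).
  rewrite Forall_forall in Hall; auto.
Qed.

Lemma birthday_right_lt G g : In g (rightOpts G) -> birthday g < birthday G.
Proof.
  destruct G as [gl gr]; simpl; intros Hin.
  enough (S (birthday g) <= list_max (map (fun g => S (birthday g)) gr)) by lia.
  apply list_max_ge, in_map_iff; eauto.
Qed.

Lemma birthday_right_achieved gr : gr <> [] ->
  exists g, In g gr /\ birthday (Game [] gr) = S (birthday g).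
Proof.
  intros Hne.
  destruct (in_map_iff (fun g => S (birthday g)) gr
              (list_max (map (fun g => S (birthday g)) gr))) as [Hex _].
  destruct Hex as [g [Hg Hin]].
  - apply list_max_In; destruct gr; [congruence|discriminate].
  - exists g; split; [exact Hin|]; simpl; congruence.
Qed.

Lemma right_run_le_birthday k G : right_run G k -> k <= birthday G.
Proof.
  revert G; induction k as [|k IH]; intros G Hrun; [lia|].
  destruct Hrun as [g [Hin Hrun]].
  apply IH in Hrun; apply birthday_right_lt in Hin; lia.
Qed.

Lemma left_dead_end_leftOpts G : left_dead_end G -> leftOpts G = [].
Proof. intros HG; apply HG; constructor. Qed.

Lemma left_dead_end_right G g :
  left_dead_end G -> In g (rightOpts G) -> left_dead_end g.
Proof. intros HG Hin S HS; apply HG; eapply subpos_right; eauto. Qed.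

Lemma right_run_birthday G : left_dead_end G -> right_run G (birthday G).
Proof.
  induction G as [G IH] using (well_founded_ind (well_founded_ltof _ birthday)).
  intros HG; destruct G as [gl gr].
  pose proof (left_dead_end_leftOpts _ HG) as E; simpl in E; subst gl.
  destruct gr as [|g0 gr0] eqn:Egr; [reflexivity|rewrite <- Egr in *].
  destruct (birthday_right_achieved gr) as [g [Hin ->]]; [subst; discriminate|].
  exists g; split; [exact Hin|].
  apply IH; [apply (birthday_right_lt (Game [] gr)); exact Hin|].
  eapply left_dead_end_right; [exact HG|exact Hin].
Qed.

Lemma add_Game gl gr hl hr :
  add (Game gl gr) (Game hl hr) =
  Game (map (fun g => add g (Game hl hr)) gl ++ map (add (Game gl gr)) hl)
       (map (fun g => add g (Game hl hr)) gr ++ map (add (Game gl gr)) hr).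
Proof. reflexivity. Qed.

Lemma fst_wins_nonnil gl gr : gl <> [] ->
  fst (wins (Game gl gr)) = existsb (fun g => negb (snd (wins g))) gl.
Proof. destruct gl; [congruence|reflexivity]. Qed.

Lemma snd_wins_nonnil gl gr : gr <> [] ->
  snd (wins (Game gl gr)) = existsb (fun g => negb (fst (wins g))) gr.
Proof. destruct gr; [congruence|reflexivity]. Qed.

Lemma left_wins_first_add_zero G : leftOpts G = [] -> fst (wins (add G zero)) = true.
Proof. destruct G as [gl gr]; simpl; intros ->; reflexivity. Qed.

Lemma left_wins_first_add_ladder_succ G k : leftOpts G = [] ->
  fst (wins (add G (ladder (S k)))) = negb (snd (wins (add G (ladder k)))).
Proof.
  destruct G as [gl gr]; simpl leftOpts; intros ->.
  simpl ladder; rewrite add_Game, fst_wins_nonnil by discriminate.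
  simpl; apply orb_false_r.
Qed.

Lemma right_wins_first_add_ladder k G : left_dead_end G ->
  snd (wins (add G (ladder k))) = true <-> right_run G k.
Proof.
  revert G; induction k as [|k IH]; intros [gl gr] HG;
    pose proof (left_dead_end_leftOpts _ HG) as E; simpl in E; subst gl;
    simpl ladder; unfold zero; rewrite add_Game; fold zero.
  - destruct gr as [|g gr]; [simpl; tauto|].
    rewrite snd_wins_nonnil by discriminate; simpl right_run.
    split; [|discriminate]; intros Hwin.
    apply existsb_exists in Hwin; destruct Hwin as [x [Hin Hx]].
    rewrite app_nil_r in Hin; apply in_map_iff in Hin; destruct Hin as [g' [<- Hin]].
    rewrite left_wins_first_add_zero in Hx; [discriminate|].
    apply left_dead_end_leftOpts, (left_dead_end_right _ _ HG), Hin.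
  - rewrite snd_wins_nonnil by (simpl; destruct gr; discriminate).
    rewrite existsb_app; simpl existsb at 2; rewrite orb_false_r.
    rewrite existsb_exists; simpl right_run; split.
    + intros [x [Hin Hx]]; apply in_map_iff in Hin; destruct Hin as [g [<- Hin]].
      pose proof (left_dead_end_right _ _ HG Hin) as Hg.
      exists g; split; [exact Hin|]; apply (IH g Hg).
      change (Game [ladder k] [zero]) with (ladder (S k)) in Hx.
      rewrite left_wins_first_add_ladder_succ, negb_involutive in Hx;
        [exact Hx|apply left_dead_end_leftOpts, Hg].
    + intros [g [Hin Hrun]]; exists (add g (ladder (S k))).
      split; [apply in_map_iff; eauto|].
      pose proof (left_dead_end_right _ _ HG Hin) as Hg.
      rewrite left_wins_first_add_ladder_succ, negb_involutive;
        [apply (IH g Hg), Hrun|apply left_dead_end_leftOpts, Hg].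
Qed.

Lemma left_wins_first_add_ladder G k : left_dead_end G ->
  fst (wins (add G (ladder (S k)))) = true <-> ~ right_run G k.
Proof.
  intros HG; rewrite left_wins_first_add_ladder_succ by
    apply left_dead_end_leftOpts, HG.
  rewrite <- (right_wins_first_add_ladder k G HG), negb_true_iff.
  destruct (snd _); split; congruence.
Qed.

Lemma outcome_le_left_wins_first G H :
  outcome_le (o G) (o H) -> fst (wins G) = true -> fst (wins H) = true.
Proof.
  unfold outcome_le, o.
  destruct (wins G) as [[] []], (wins H) as [[] []];
    simpl; intuition discriminate.
Qed.

Lemma universe_all : universe (fun _ => True).
Proof. repeat split; auto. Qed.

Theorem mainTheorem12 (G H : game) :
  left_dead_end G -> left_dead_end H -> game_ge G H ->
  birthday G <= birthday H.
Proof.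
  intros HG HH Hge.
  destruct (le_lt_dec (birthday G) (birthday H)) as [|Hlt]; [assumption|exfalso].
  pose (X := ladder (S (birthday G))).
  assert (HwinH : fst (wins (add H X)) = true).
  { apply left_wins_first_add_ladder; [exact HH|].
    intros Hrun; apply right_run_le_birthday in Hrun; lia. }
  refine (proj1 (left_wins_first_add_ladder G _ HG) _ (right_run_birthday G HG)).
  exact (outcome_le_left_wins_first _ _ (Hge _ universe_all X I) HwinH).
Qed.
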